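(* Let $A\subseteq\mathbb{R}^n$ be finite (Euclidean metric) and $\beta>0$. For all $r,k>0$, $$\mathrm{DCr}^\beta_{r,k}(A)\subseteq\mathrm{Cr}^\beta_{r,k}(A)\subseteq\mathrm{DCr}^\beta_{(2\beta+1)r,k}(A).$$
   Context: $d$ is the Euclidean metric and $\bar B_d(x,r)=\{y:d(x,y)\le r\}$. For finite $A\subseteq\mathbb{R}^n$, $k>0$, $x\in\mathbb{R}^n$, the $k$-core distance $\mathrm{core}^A_k(x)$ is the distance from $x$ to its $\lceil k\rceil$-th nearest neighbor in $A$ (each point of $A$ counted once, $x$ itself counting if $x\in A$); equivalently $\min\{r\ge0:|\bar B_d(x,r)\cap A|\ge k\}$, and $\infty$ if $k>|A|$. For $\beta>0$: $\Lambda^\beta_k(a,x)=\max\{\beta\,\mathrm{core}^A_k(a),d(a,x)\}$, $B^\beta_{r,k}(a)=\{x:\Lambda^\beta_k(a,x)\le r\}$, core bifiltration $\mathrm{Cr}^\beta_{r,k}(A)=\bigcup_{a\in A}B^\beta_{r,k}(a)$. The Voronoi cell of $a\in A$ is $\mathrm{Vor}_A(a)=\{x\in\mathbb{R}^n: d(a,x)\le d(a',x)\text{ for all }a'\in A\}$. The Delaunay core bifiltration is $\mathrm{DCr}^\beta_{r,k}(A)=\bigcup_{a\in A}\big(B^\beta_{r,k}(a)\cap\mathrm{Vor}_A(a)\big)$. *)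

From HB Require Import structures.
From mathcomp Require Import all_boot all_order all_algebra.
From mathcomp Require Import finmap.
From mathcomp Require Import all_classical all_reals ereal.
Set Implicit Arguments. Unset Strict Implicit. Unset Printing Implicit Defensive.
Import Order.TTheory GRing.Theory Num.Theory.
Local Open Scope classical_set_scope.
Local Open Scope ring_scope.


Definition edist (R : realType) (n : nat) (x y : 'rV[R]_n) : R :=
  Num.sqrt (\sum_(i < n) (x ord0 i - y ord0 i) ^+ 2).

Definition ball_count (R : realType) (n : nat) (A : {fset 'rV[R]_n})
  (x : 'rV[R]_n) (r : R) : nat :=
  #|` [fset y in A | edist x y <= r]%fset|%fset.

(* k-core distance: min { r >= 0 : |B(x,r) ∩ A| >= k }, +oo if no such r. *)
Definition core_dist (R : realType) (n : nat) (A : {fset 'rV[R]_n}) (k : R)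
  (x : 'rV[R]_n) : \bar R :=
  ereal_inf [set (r%:E)%E | r in [set r : R | 0 <= r /\ k <= (ball_count A x r)%:R]].

Definition Lambda (R : realType) (n : nat) (A : {fset 'rV[R]_n}) (beta k : R)
  (a x : 'rV[R]_n) : \bar R :=
  Order.max (beta%:E * core_dist A k a)%E (edist a x)%:E.

Definition core_ball (R : realType) (n : nat) (A : {fset 'rV[R]_n}) (beta r k : R)
  (a : 'rV[R]_n) : set 'rV[R]_n :=
  [set x | (Lambda A beta k a x <= r%:E)%E].

Definition Cr (R : realType) (n : nat) (A : {fset 'rV[R]_n}) (beta r k : R)
  : set 'rV[R]_n :=
  [set x | exists2 a, a \in A & core_ball A beta r k a x].

Definition Vor (R : realType) (n : nat) (A : {fset 'rV[R]_n}) (a : 'rV[R]_n)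
  : set 'rV[R]_n :=
  [set x | forall a', a' \in A -> edist a x <= edist a' x].

Definition DCr (R : realType) (n : nat) (A : {fset 'rV[R]_n}) (beta r k : R)
  : set 'rV[R]_n :=
  [set x | exists2 a, a \in A & (core_ball A beta r k a `&` Vor A a) x].

From HB Require Import structures.
From mathcomp Require Import all_boot all_order all_algebra.
From mathcomp Require Import finmap.
From mathcomp Require Import all_classical all_reals ereal.
From mathcomp Require Import ring lra.
Import Order.TTheory GRing.Theory Num.Theory.
Local Open Scope classical_set_scope.
Local Open Scope ring_scope.

(* For the second, let x lie in the core
   ball of a and let a' be a point of A nearest to x, so that x is in the
   Voronoi cell of a'. Then d(a', x) <= d(a, x) <= r and d(a, a') <= 2r. The
   k-core distance is 1-Lipschitz, since a ball of radius s around a lies in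
   the ball of radius s + d(a, a') around a'; hence
   beta core(a') <= beta core(a) + 2 beta r <= (2 beta + 1) r. *)

Section EuclideanDistance.
Context {R : realType} {n : nat}.

Lemma CauchySchwarz_sum (u v : 'I_n -> R) :
  (\sum_i u i * v i) ^+ 2 <= (\sum_i u i ^+ 2) * (\sum_i v i ^+ 2).
Proof.
pose a i j := u i ^+ 2 * v j ^+ 2.
pose b i j := (u i * v i) * (u j * v j).
(* Lagrange's identity: the gap is half a sum of squares. *)
have lagrange : \sum_i \sum_j (u i * v j - u j * v i) ^+ 2 =
    \sum_i \sum_j a i j + \sum_i \sum_j a j i - 2 * \sum_i \sum_j b i j.
  rewrite mulr_sumr -big_split /= -sumrB; apply: eq_bigr => i _.
  rewrite mulr_sumr -big_split /= -sumrB; apply: eq_bigr => j _.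
  by rewrite /a /b; ring.
have gap_ge0 : 0 <= \sum_i \sum_j (u i * v j - u j * v i) ^+ 2.
  by apply: sumr_ge0 => i _; apply: sumr_ge0 => j _; apply: sqr_ge0.
have aC : \sum_i \sum_j a j i = \sum_i \sum_j a i j by rewrite exchange_big.
have -> : (\sum_i u i ^+ 2) * (\sum_i v i ^+ 2) = \sum_i \sum_j a i j.
  by rewrite big_distrlr.
have -> : (\sum_i u i * v i) ^+ 2 = \sum_i \sum_j b i j.
  by rewrite expr2 big_distrlr.
rewrite lagrange aC in gap_ge0; lra.
Qed.

Lemma edistC (x y : 'rV[R]_n) : edist x y = edist y x.
Proof.
by rewrite /edist; congr Num.sqrt; apply: eq_bigr => i _; rewrite -sqrrN opprB.
Qed.

Lemma edist_ge0 (x y : 'rV[R]_n) : 0 <= edist x y.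
Proof. exact: sqrtr_ge0. Qed.

Lemma edist_triangle (x y z : 'rV[R]_n) : edist x z <= edist x y + edist y z.
Proof.
rewrite /edist.
set u := fun i : 'I_n => x ord0 i - y ord0 i.
set v := fun i : 'I_n => y ord0 i - z ord0 i.
have -> : \sum_i (x ord0 i - z ord0 i) ^+ 2 =
    \sum_i u i ^+ 2 + 2 * \sum_i u i * v i + \sum_i v i ^+ 2.
  rewrite mulr_sumr -!big_split /=; apply: eq_bigr => i _; rewrite /u /v; ring.
have u2_ge0 : 0 <= \sum_i u i ^+ 2 by apply: sumr_ge0 => i _; apply: sqr_ge0.
have v2_ge0 : 0 <= \sum_i v i ^+ 2 by apply: sumr_ge0 => i _; apply: sqr_ge0.
set Nu := Num.sqrt (\sum_i u i ^+ 2); set Nv := Num.sqrt (\sum_i v i ^+ 2).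
have uv_le : \sum_i u i * v i <= Nu * Nv.
  rewrite -sqrtrM // (le_trans (ler_norm _)) // -sqrtr_sqr ler_sqrt.
    exact: CauchySchwarz_sum.
  by rewrite mulr_ge0.
have Nu_ge0 : 0 <= Nu := sqrtr_ge0 _.
have Nv_ge0 : 0 <= Nv := sqrtr_ge0 _.
rewrite -[Nu + Nv]ger0_norm ?addr_ge0 // -sqrtr_sqr ler_sqrt ?sqr_ge0 //.
rewrite sqrrD !sqr_sqrtr // -mulr_natl; lra.
Qed.

End EuclideanDistance.

Section CoreDistance.
Context {R : realType} {n : nat} {A : {fset 'rV[R]_n}} {k : R}.

Lemma ball_count_le_shift (a a' : 'rV[R]_n) (s : R) :
  (ball_count A a s <= ball_count A a' (s + edist a' a))%N.
Proof.
apply/fsubset_leq_card/fsubsetP => y; rewrite !inE => /andP[-> ay_le] /=.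
by rewrite (le_trans (edist_triangle a' a y)) // addrC lerD.
Qed.

Lemma core_dist_lipschitz (a a' : 'rV[R]_n) :
  (core_dist A k a' <= core_dist A k a + (edist a' a)%:E)%E.
Proof.
rewrite -leeBlDr //; apply: le_ereal_inf_tmp => _ [s [s_ge0 k_le] <-].
rewrite leeBlDr // -EFinD; apply: ereal_inf_lbound.
exists (s + edist a' a) => //; split; first by rewrite addr_ge0 ?edist_ge0.
by rewrite (le_trans k_le) // ler_nat ball_count_le_shift.
Qed.

Lemma core_ball_move (beta r : R) (a a' x : 'rV[R]_n) : 0 <= beta ->
  core_ball A beta r k a x -> edist a' x <= edist a x ->
  core_ball A beta ((2 * beta + 1) * r) k a' x.
Proof.
move=> beta_ge0; rewrite /core_ball /Lambda /= !ge_max lee_fin.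
move=> /andP[core_a ax_le] a'x_le.
have aa'_le : edist a' a <= 2 * r.
  by have := edist_triangle a' x a; rewrite (edistC x a); lra.
have r_ge0 : 0 <= r := le_trans (edist_ge0 a x) ax_le.
apply/andP; split.
  apply: (le_trans (lee_wpmul2l _ (core_dist_lipschitz a a'))) => //.
  rewrite muleDr ?fin_num_adde_defl // -EFinM.
  have -> : (2 * beta + 1) * r = r + beta * (2 * r) by ring.
  by rewrite EFinD leeD // lee_fin ler_wpM2l.
by rewrite lee_fin; have := mulr_ge0 beta_ge0 r_ge0; lra.
Qed.

End CoreDistance.

Section Bifiltrations.
Context {R : realType} {n : nat} {A : {fset 'rV[R]_n}}.

Lemma exists_Vor (a x : 'rV[R]_n) :
  a \in A -> exists2 a', a' \in A & Vor A a' x.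
Proof.
move=> aA; have [b _ b_min] :=
  arg_minP (fun b : A => edist (val b) x) (P := xpredT) (i0 := [` aA]%fset) erefl.
by exists (val b) => [|c cA]; [exact: valP | exact: (b_min [` cA]%fset)].
Qed.

Lemma DCr_sub_Cr (beta r k : R) :
  DCr A beta r k `<=` Cr A beta r k.
Proof. by move=> x [a aA [ax _]]; exists a. Qed.

Lemma Cr_sub_DCr (beta r k : R) :
  0 <= beta -> Cr A beta r k `<=` DCr A beta ((2 * beta + 1) * r) k.
Proof.
move=> beta_ge0 x [a aA ax]; have [a' a'A a'x] := exists_Vor a x aA.
by exists a' => //; split=> //; apply: core_ball_move ax (a'x a aA).
Qed.

End Bifiltrations.

Theorem mainTheorem5 (R : realType) (n : nat) (A : {fset 'rV[R]_n}) (beta : R)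
  (hbeta : 0 < beta) :
  forall r k : R, 0 < r -> 0 < k ->
    DCr A beta r k `<=` Cr A beta r k /\
    Cr A beta r k `<=` DCr A beta ((2 * beta + 1) * r) k.
Proof.
move=> r k _ _; split; first exact: DCr_sub_Cr.
exact: Cr_sub_DCr (ltW hbeta).
Qed.
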